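(* Let $\Omega\subset\mathbb R^d$ be bounded and convex, let $\sigma_a,\sigma_b$ be bounded positive functions on $\Omega$, and suppose there is no scattering ($\sigma_s\equiv 0$). Fix a direction $\mathbf v'\in\mathbb S^{d-1}$ and a point $\mathbf x\in\Omega$, set $\mathbf x':=\mathbf x-\tau_-(\mathbf x,\mathbf v')\mathbf v'\in\partial\Omega$, $\widetilde\sigma_a(s):=\sigma_a(\mathbf x'+s\mathbf v')$, $\widetilde\sigma_b(s):=\sigma_b(\mathbf x'+s\mathbf v')$. For $j=1,2$, let $u_j\ge 0$ be the solution of $\mathbf v\cdot\nabla u_j+\sigma_a u_j+\sigma_b\langle u_j\rangle u_j=0$ in $\Omega\times\mathbb S^{d-1}$ with collimated incoming boundary source $u_j=\mathfrak g_j(\mathbf x)\delta(\mathbf v-\mathbf v')$, and let $\phi_j(s):=\langle u_j\rangle(\mathbf x'+s\mathbf v')$, which satisfies \[ \phi_j(t)=\mathfrak g_j(\mathbf x')\exp\Big(-\int_0^t\big(\widetilde\sigma_a(s)+\widetilde\sigma_b(s)\phi_j(s)\big)ds\Big),\qquad t\in[0,\tau_-(\mathbf x,\mathbf v')]. \] If $\mathfrak g_1>\mathfrak g_2>0$, then $\phi_1(t)>\phi_2(t)$ for all $t\in[0,\tau_-(\mathbf x,\mathbf v')]$.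
   Context: $\mathbb S^{d-1}$ is the unit sphere with normalized surface measure $d\mathbf v$ and $\langle u\rangle(\mathbf x):=\int_{\mathbb S^{d-1}}u(\mathbf x,\mathbf v)d\mathbf v$. For $(\mathbf x,\mathbf v)\in\Omega\times\mathbb S^{d-1}$, $\tau_-(\mathbf x,\mathbf v):=\sup\{s\in\mathbb R:\mathbf x-s\mathbf v\in\Omega\}$. The boundary strengths $\mathfrak g_1,\mathfrak g_2$ are functions on $\partial\Omega$. *)

From HB Require Import structures.
From mathcomp Require Import all_boot all_order all_algebra.
From mathcomp Require Import all_classical all_reals all_analysis.
Set Implicit Arguments. Unset Strict Implicit. Unset Printing Implicit Defensive.
Import Order.TTheory GRing.Theory Num.Theory.
Import numFieldNormedType.Exports.
Local Open Scope classical_set_scope.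
Local Open Scope ring_scope.

Definition sqnorm (R : realType) (d : nat) (v : 'rV[R]_d) : R :=
  \sum_(i < d) (v ord0 i) ^+ 2.

Definition on_sphere (R : realType) (d : nat) (v : 'rV[R]_d) : Prop :=
  sqnorm v = 1.

Definition boundary (R : realType) (d : nat) (Om : set 'rV[R]_d) : set 'rV[R]_d :=
  closure Om `\` interior Om.

Definition tau_minus (R : realType) (d : nat) (Om : set 'rV[R]_d)
  (x v : 'rV[R]_d) : R := sup [set s : R | Om (x - s *: v)].

Definition bdd_pos_on (R : realType) (d : nat) (Om : set 'rV[R]_d)
  (f : 'rV[R]_d -> R) : Prop :=
  exists M : R, forall y, Om y -> 0 < f y <= M.

From HB Require Import structures.
From mathcomp Require Import all_boot all_order all_algebra.
From mathcomp Require Import all_classical all_reals all_analysis.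
From mathcomp Require Import ring lra.
Set Implicit Arguments.
Unset Strict Implicit.
Unset Printing Implicit Defensive.

Import Order.TTheory GRing.Theory Num.Theory.
Import numFieldNormedType.Exports.
Local Open Scope classical_set_scope.
Local Open Scope ring_scope.

(* Along the ray from x' the two densities solve p_j = g_j exp(-\int_0^t (a + b p_j)),
   so L := ln p1 - ln p2 satisfies L r - L t = \int_r^t b (p1 - p2), while
   p1 - p2 <= p1 L <= g1 L.  If p1 t <= p2 t, i.e. L t <= 0, then on the window
   [t - h, t], with h = 1 / (2 g1 Mb) and Mb a bound on b, the difference p1 - p2
   is bounded by half of its own supremum, so p1 <= p2 on the whole window.
   Stepping back by h finitely many times reaches 0, where p1 0 = g1 > g2 = p2 0.
   The geometry only provides that x' lies on the boundary and that the segment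
   ]x', x] lies in the convex set, where sa and sb are positive and bounded. *)

Lemma on_sphere_neq0 (R : realType) (d : nat) (v : 'rV[R]_d) :
  on_sphere v -> v != 0.
Proof.
apply: contraPN => /eqP ->; rewrite /on_sphere /sqnorm big1 => [|i _].
  by move/esym/eqP; rewrite oner_eq0.
by rewrite mxE expr0n.
Qed.

Section tau_minus.
Variables (R : realType) (d : nat) (Om : set 'rV[R]_d) (x v : 'rV[R]_d).
Hypotheses (Om_bounded : bounded_set Om) (v_neq0 : v != 0) (Om_x : Om x).

Let S := [set s : R | Om (x - s *: v)].

Let S0 : S 0.
Proof. by rewrite /S /= scale0r subr0. Qed.

Let S_ubound : has_ubound S.
Proof.
case: Om_bounded => M [M_real HM].
have Om_le : Om `<=` [set y | `|y| <= `|M| + 1].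
  by apply: HM; apply: le_lt_trans (real_ler_norm M_real) _; rewrite ltrDl.
have v_gt0 : 0 < `|v| by rewrite normr_gt0.
exists ((`|x| + `|M| + 1) / `|v|) => s Ss; rewrite ler_pdivlMr //.
apply: (le_trans (ler_wpM2r (ltW v_gt0) (ler_norm s))); rewrite -normrZ.
have -> : s *: v = x - (x - s *: v) by rewrite opprB addrC subrK.
by apply: (le_trans (ler_normB _ _)); rewrite -addrA lerD2l; exact: Om_le.
Qed.

Lemma tau_minus_boundary : boundary Om (x - tau_minus Om x v *: v).
Proof.
rewrite /tau_minus -/S; set T := sup S.
have v_gt0 : 0 < `|v| by rewrite normr_gt0.
have step_gt0 e : 0 < e -> 0 < e / (`|v| + 1) by move=> e0; rewrite divr_gt0 ?addr_gt0.
have step_small e : 0 < e -> e / (`|v| + 1) * `|v| < e.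
  by move=> e0; rewrite mulrAC ltr_pdivrMr ?addr_gt0 // ltr_pM2l // ltrDl.
split.
  move=> B /nbhs_ballP [e e0 eB].
  have Te_lt : T - e / (`|v| + 1) < T by rewrite gtrBl step_gt0.
  have [s Ss Ts] := sup_gt (ex_intro _ 0 S0) Te_lt.
  have sT : s <= T by exact: ub_le_sup.
  exists (x - s *: v); split => //; apply: eB.
  rewrite -ball_normE /= opprB addrC addrA subrK -scalerBl normrZ.
  rewrite ler0_norm ?subr_le0 // opprB; apply: le_lt_trans _ (step_small _ e0).
  by rewrite ler_wpM2r ?ltW //; lra.
move=> /nbhs_ballP [e e0 eB].
have /(ub_le_sup S_ubound) : S (T + e / (`|v| + 1)); last by rewrite gerDl leNgt step_gt0.
rewrite /S /= scalerDl opprD addrA; apply: eB.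
rewrite -ball_normE /= subKr normrZ gtr0_norm ?step_gt0 //.
exact: step_small.
Qed.

Hypothesis Om_convex : convex_set Om.

Lemma tau_minus_ray s : 0 < s <= tau_minus Om x v ->
  Om (x - tau_minus Om x v *: v + s *: v).
Proof.
rewrite /tau_minus -/S; set T := sup S => /andP[s_gt0 sT].
have -> : x - T *: v + s *: v = x - (T - s) *: v.
  by rewrite scalerBl opprB addrA addrAC.
have Ts_lt : T - s < T by rewrite gtrBl.
have [t St Tst] := sup_gt (ex_intro _ 0 S0) Ts_lt.
have t_gt0 : 0 < t by apply: le_lt_trans Tst; rewrite subr_ge0.
have l_ge0 : 0 <= 1 - (T - s) / t by rewrite subr_ge0 ler_pdivrMr ?mul1r ?ltW.
have l_le1 : 1 - (T - s) / t <= 1 by rewrite gerBl divr_ge0 ?subr_ge0 // ltW.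
have := Om_convex (Itv01 l_ge0 l_le1) (mem_set Om_x) (mem_set St).
rewrite inE; congr Om; rewrite /conv /= /unstable.onem subKr.
by rewrite scalerBr scalerA divfK ?gt_eqF // scalerBl addrA subrK scale1r.
Qed.

End tau_minus.

Section bounded_Rintegral.
Variable R : realType.
Local Notation mu := (@lebesgue_measure R).

Lemma Rintegral_itv_le_mul (r t C : R) (f : R -> R) : r <= t ->
  mu.-integrable `]r, t] (EFin \o f) -> (forall s, r < s <= t -> f s <= C) ->
  \int[mu]_(s in `]r, t]) f s <= C * (t - r).
Proof.
move=> rt f_int fC.
have mu_itv : mu `]r, t] = (t - r)%:E.
  rewrite lebesgue_measure_itv /= lte_fin -EFinB.
  have [//|tr] := ltP r t; have -> : t = r by apply/eqP; rewrite eq_le tr rt.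
  by rewrite subrr.
have C_int : mu.-integrable `]r, t] (EFin \o cst C).
  apply: measurable_bounded_integrable => //; first by rewrite /= mu_itv ltry.
  by exists `|C|; split; rewrite ?num_real // => M CM s _; exact: ltW.
have fC' s : [set` `]r, t]] s -> f s <= cst C s by rewrite /= in_itv /=; exact: fC.
apply: le_trans (le_Rintegral _ f_int C_int fC') _ => //.
by rewrite Rintegral_cst //= mu_itv.
Qed.

End bounded_Rintegral.

Lemma halving_bound_le0 (T : Type) (R : realType) (W : set T) (D : T -> R) :
  has_ubound (D @` W) ->
  (forall M, 0 <= M -> (forall s, W s -> D s <= M) ->
    forall r, W r -> D r <= M / 2) ->
  forall r, W r -> D r <= 0.
Proof.
move=> D_ub halve r Wr; set M := Num.max (sup (D @` W)) 0.
have M_ge0 : 0 <= M by rewrite le_max lexx orbT.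
have D_le_M s : W s -> D s <= M.
  by move=> Ws; rewrite le_max; apply/orP; left; apply: ub_le_sup D_ub _ _; exists s.
have M_le_half : M <= M / 2.
  rewrite ge_max divr_ge0 // andbT; apply: ge_sup; first by exists (D r), r.
  by move=> _ [s Ws <-]; exact: halve.
by apply: le_trans (D_le_M _ Wr) _; lra.
Qed.

Section integral_equation_comparison.
Variables (R : realType) (T g1 g2 Mb : R) (a b p1 p2 : R -> R).
Local Notation mu := (@lebesgue_measure R).
Hypotheses (g2_gt0 : 0 < g2) (g2_lt_g1 : g2 < g1) (Mb_gt0 : 0 < Mb).
Hypothesis a_ge0 : forall s, 0 < s <= T -> 0 <= a s.
Hypothesis b_bounded : forall s, 0 < s <= T -> 0 <= b s <= Mb.
Hypothesis f1_int : mu.-integrable `[0, T] (fun s => (a s + b s * p1 s)%:E).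
Hypothesis f2_int : mu.-integrable `[0, T] (fun s => (a s + b s * p2 s)%:E).
Hypothesis p1E : forall t, 0 <= t <= T ->
  p1 t = g1 * expR (- \int[mu]_(s in `[0, t]) (a s + b s * p1 s)).
Hypothesis p2E : forall t, 0 <= t <= T ->
  p2 t = g2 * expR (- \int[mu]_(s in `[0, t]) (a s + b s * p2 s)).

Let F1 t := \int[mu]_(s in `[0, t]) (a s + b s * p1 s).
Let F2 t := \int[mu]_(s in `[0, t]) (a s + b s * p2 s).
Let L t := (ln g1 - F1 t) - (ln g2 - F2 t).

Let g1_gt0 : 0 < g1. Proof. exact: lt_trans g2_lt_g1. Qed.

Let integrable_itv_oc (f : R -> R) r t : 0 <= r -> t <= T ->
  mu.-integrable `[0, T] (EFin \o f) -> mu.-integrable `]r, t] (EFin \o f).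
Proof.
move=> r_ge0 tT f_int; apply: integrableS f_int => // s /=.
rewrite !in_itv /= => /andP[rs st].
by rewrite (le_trans r_ge0 (ltW rs)) (le_trans st tT).
Qed.

Let p1_gt0 t : 0 <= t <= T -> 0 < p1 t.
Proof. by move=> /p1E ->; rewrite mulr_gt0 ?expR_gt0. Qed.

Let p2_gt0 t : 0 <= t <= T -> 0 < p2 t.
Proof. by move=> /p2E ->; rewrite mulr_gt0 ?expR_gt0. Qed.

Let F1_ge0 t : 0 <= t <= T -> 0 <= F1 t.
Proof.
move=> /andP[t_ge0 tT]; rewrite /F1 -Rintegral_itv_obnd_cbnd.
  apply: Rintegral_ge0 => s /=; rewrite in_itv /= => /andP[s_gt0 st].
  have sT : 0 < s <= T by rewrite s_gt0 (le_trans st tT).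
  have /andP[b_ge0 _] := b_bounded sT.
  have p1_ge0 : 0 <= p1 s by apply/ltW/p1_gt0; rewrite (ltW s_gt0) (le_trans st tT).
  by rewrite addr_ge0 ?a_ge0 // mulr_ge0.
exact: integrable_itv_oc.
Qed.

Let p1_le_g1 t : 0 <= t <= T -> p1 t <= g1.
Proof.
move=> tT; rewrite p1E // -[leRHS]mulr1 ler_pM2l // expR_le1 oppr_le0.
exact: F1_ge0.
Qed.

Let p2_lt_p1_at0 : 0 <= T -> p2 0 < p1 0.
Proof.
move=> T_ge0; have t0 : 0 <= (0 : R) <= T by rewrite lexx.
by rewrite p1E // p2E // set_itv1 !Rintegral_set1 oppr0 expR0 !mulr1.
Qed.

Let p1_expE t : 0 <= t <= T -> p1 t = expR (ln g1 - F1 t).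
Proof. by move=> tT; rewrite p1E // expRD lnK. Qed.

Let p2_expE t : 0 <= t <= T -> p2 t = expR (ln g2 - F2 t).
Proof. by move=> tT; rewrite p2E // expRD lnK. Qed.

Let log_ratio_le0 t : 0 <= t <= T -> p1 t <= p2 t -> L t <= 0.
Proof. by move=> tT; rewrite p1_expE // p2_expE // ler_expR subr_le0. Qed.

(* [p1 - p2 = p1 (1 - e^-L)] and [1 - e^-L <= L]. *)
Let sub_le_mul_log_ratio t : 0 <= t <= T -> p1 t - p2 t <= p1 t * L t.
Proof.
move=> tT; rewrite p1_expE // p2_expE //.
have -> : ln g2 - F2 t = (ln g1 - F1 t) + - L t by rewrite /L; lra.
rewrite (expRD _ (- L t)); have := expR_ge1Dx (- L t).
have := expR_gt0 (ln g1 - F1 t); nra.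
Qed.

Let weighted_diff_int r t : 0 <= r -> t <= T ->
  mu.-integrable `]r, t] (EFin \o (fun s => b s * (p1 s - p2 s))).
Proof.
move=> r_ge0 tT.
have -> : EFin \o (fun s => b s * (p1 s - p2 s)) =
    ((fun s => (a s + b s * p1 s)%:E) \- (fun s => (a s + b s * p2 s)%:E))%E.
  by apply/funext => s /=; rewrite -EFinB; congr EFin; ring.
by apply: integrableB => //; exact: integrable_itv_oc.
Qed.

Let log_ratio_sub r t : 0 <= r -> r <= t -> t <= T ->
  L r - L t = \int[mu]_(s in `]r, t]) (b s * (p1 s - p2 s)).
Proof.
move=> r_ge0 rt tT.
have -> : L r - L t = (F1 t - F1 r) - (F2 t - F2 r) by rewrite /L; lra.
have int_0t (p : R -> R) :
    mu.-integrable `[0, T] (fun s => (a s + b s * p s)%:E) ->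
    mu.-integrable `[0, t] (EFin \o (fun s => a s + b s * p s)).
  move=> p_int; apply: integrableS p_int => //.
  by move=> s /=; rewrite !in_itv /= => /andP[-> st]; rewrite (le_trans st tT).
rewrite /F1 /F2 !Rintegral_itvB ?int_0t ?bnd_simp // -RintegralB //.
- by apply: eq_Rintegral => s _; ring.
- exact: integrable_itv_oc f1_int.
- exact: integrable_itv_oc f2_int.
Qed.

Let h := (2 * (g1 * Mb))^-1.

Let window t0 := [set r | 0 <= r <= t0 /\ t0 - h <= r].

Let window_halving t0 : 0 <= t0 <= T -> p1 t0 <= p2 t0 ->
  forall M, 0 <= M -> (forall s, window t0 s -> p1 s - p2 s <= M) ->
  forall r, window t0 r -> p1 r - p2 r <= M / 2.
Proof.
move=> t0T bad0 M M_ge0 diff_le r [/andP[r_ge0 r_le_t0] r_near].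
have t0_le_T : t0 <= T by case/andP: t0T.
have rT : 0 <= r <= T by rewrite r_ge0 (le_trans r_le_t0).
apply: le_trans (sub_le_mul_log_ratio rT) _.
have [Lr_le0|Lr_gt0] := leP (L r) 0.
  by rewrite (le_trans _ (divr_ge0 M_ge0 _)) // mulr_ge0_le0 // ltW // p1_gt0.
have int_le : \int[mu]_(s in `]r, t0]) (b s * (p1 s - p2 s)) <= Mb * M * (t0 - r).
  apply: Rintegral_itv_le_mul (weighted_diff_int r_ge0 t0_le_T) _ => //.
  move=> s /andP[rs st]; have sT : 0 < s <= T.
    by rewrite (le_lt_trans r_ge0 rs) (le_trans st t0_le_T).
  have /andP[b_ge0 b_le] := b_bounded sT.
  have Ws : window t0 s.
    by split; [rewrite (ltW (le_lt_trans r_ge0 rs)) st | exact: le_trans r_near (ltW rs)].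
  have := diff_le _ Ws; nra.
have Lt0_le0 := log_ratio_le0 t0T bad0.
have L_le : L r <= Mb * M * h.
  rewrite -log_ratio_sub // in int_le.
  have : 0 <= Mb * M by rewrite mulr_ge0 // ltW.
  have : t0 - r <= h by lra.
  nra.
have -> : M / 2 = g1 * (Mb * M * h).
  by rewrite /h; field; rewrite !gt_eqF.
have := p1_le_g1 rT; have := p1_gt0 rT; nra.
Qed.

Let window_bad t0 : 0 <= t0 <= T -> p1 t0 <= p2 t0 ->
  forall r, window t0 r -> p1 r <= p2 r.
Proof.
move=> t0T bad0 r Wr; rewrite -subr_le0; move: r Wr.
apply: halving_bound_le0 (window_halving t0T bad0).
exists g1 => _ [s [/andP[s_ge0 st0] _] <-].
have sT : 0 <= s <= T by rewrite s_ge0 (le_trans st0) //; case/andP: t0T.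
by have := p1_le_g1 sT; have := p2_gt0 sT; lra.
Qed.

Lemma integral_equation_comparison t : 0 <= t <= T -> p2 t < p1 t.
Proof.
have h_gt0 : 0 < h by rewrite invr_gt0 !mulr_gt0.
suff lt_upto n s : 0 <= s <= T -> s <= n%:R * h -> p2 s < p1 s.
  move=> /[dup] tT /andP[t_ge0 _]; apply: (lt_upto (Num.bound (t / h))) => //.
  by rewrite -ler_pdivrMr // ltW // archi_boundP // divr_ge0 // ltW.
elim: n s => [|n IHn] s sT.
  rewrite mul0r => s_le0; have {s_le0}s0 : s = 0.
    by apply/eqP; rewrite eq_le s_le0; case/andP: sT.
  by move: sT; rewrite s0 => /andP[_ T_ge0]; exact: p2_lt_p1_at0.
rewrite -natr1 mulrDl mul1r => s_le; rewrite ltNge; apply/negP => bad.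
have [s_ge0 s_le_T] := andP sT.
have r_ge0 : 0 <= Num.max 0 (s - h) by rewrite le_max lexx.
have r_le_s : Num.max 0 (s - h) <= s by rewrite ge_max s_ge0 gerBl ltW.
have Wr : window s (Num.max 0 (s - h)).
  by split; rewrite ?r_ge0 ?r_le_s // le_max lexx orbT.
have : p2 (Num.max 0 (s - h)) < p1 (Num.max 0 (s - h)).
  apply: IHn; first by rewrite r_ge0 (le_trans r_le_s).
  by rewrite ge_max mulr_ge0 ?ler0n ?(ltW h_gt0) /=; lra.
by rewrite ltNge (window_bad sT bad Wr).
Qed.

End integral_equation_comparison.

Theorem lemma3p1 (R : realType) (d : nat) (Om : set 'rV[R]_d)
  (sa sb g1 g2 : 'rV[R]_d -> R) (x v' : 'rV[R]_d) (phi1 phi2 : R -> R) :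
  bounded_set Om -> convex_set Om ->
  bdd_pos_on Om sa -> bdd_pos_on Om sb ->
  on_sphere v' -> Om x ->
  (forall y, boundary Om y -> g2 y > 0) ->
  (forall y, boundary Om y -> g1 y > g2 y) ->
  let T := tau_minus Om x v' in
  let x' := x - T *: v' in
  let sa_t := fun s : R => sa (x' + s *: v') in
  let sb_t := fun s : R => sb (x' + s *: v') in
  (* the integrands are Lebesgue integrable on [0, T], so the equations make sense *)
  (lebesgue_measure).-integrable `[0, T] (fun s => (sa_t s + sb_t s * phi1 s)%:E) ->
  (lebesgue_measure).-integrable `[0, T] (fun s => (sa_t s + sb_t s * phi2 s)%:E) ->
  (forall t, 0 <= t <= T -> phi1 t = g1 x' *
      expR (- Rintegral lebesgue_measure `[0, t] (fun s => sa_t s + sb_t s * phi1 s))) ->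
  (forall t, 0 <= t <= T -> phi2 t = g2 x' *
      expR (- Rintegral lebesgue_measure `[0, t] (fun s => sa_t s + sb_t s * phi2 s))) ->
  forall t, 0 <= t <= T -> phi1 t > phi2 t.
Proof.
move=> Om_bounded Om_convex [Ma sa_pos] [Mb sb_pos] v'_sphere Om_x g2_pos g1_gt_g2.
move=> T x' sa_t sb_t f1_int f2_int phi1E phi2E.
have v'_neq0 := on_sphere_neq0 v'_sphere.
have x'_boundary : boundary Om x' by exact: tau_minus_boundary.
have Om_ray s : 0 < s <= T -> Om (x' + s *: v') by exact: tau_minus_ray.
have Mb_gt0 : 0 < Mb by have /andP[sb_gt0 sb_le] := sb_pos x Om_x; exact: lt_le_trans sb_le.
apply: (integral_equation_comparison (g2_pos _ x'_boundary) (g1_gt_g2 _ x'_boundary)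
  Mb_gt0 _ _ f1_int f2_int phi1E phi2E).
- by move=> s /Om_ray /sa_pos /andP[/ltW].
- by move=> s /Om_ray /sb_pos /andP[/ltW ->].
Qed.
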